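(* Let $X$ be a Lorentzian pre-length space with timelike curvature bounded above by $0$ globally. Then $X$ is Ptolemaic, i.e. for all $x\le y\le z\le w$ in $X$, $$\ell(x,z)\,\ell(y,w)\ \ge\ \ell(x,y)\,\ell(z,w)+\ell(x,w)\,\ell(y,z).$$
   Context: A Lorentzian pre-length space $(X,d,\ll,\le,\ell)$: $(X,d)$ a metric space, $\le$ reflexive and transitive, $\ll$ transitive and contained in $\le$, $\ell:X\times X\to[0,\infty]$ with $\ell(x,z)\ge\ell(x,y)+\ell(y,z)$ whenever $x\le y\le z$, and $\ell(x,y)>0$ iff $x\ll y$. Maximising geodesic from $x\le y$: a curve $\gamma$ from $x$ to $y$, monotone for $\le$, with $\ell(\gamma(s),\gamma(u))=\ell(\gamma(s),\gamma(t))+\ell(\gamma(t),\gamma(u))$ for $s\le t\le u$. Timelike curvature bounded above by $0$ globally: (i) $\ell$ is finite and continuous on $X\times X$; (ii) any $x\ll y$ are joined by a maximising geodesic; (iii) for every timelike triangle $\Delta(x,y,z)$ ($x\ll y\ll z$ with maximising geodesics as sides) and any points $p,q$ on its sides, $\ell(p,q)\ge\ell(\bar p,\bar q)$, where $\bar p,\bar q$ are the corresponding points (same $\ell$-distances from the endpoints of their side) on a triangle in the Minkowski plane $\mathbb R^{1,1}$ with the same side lengths. *)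

From Stdlib Require Import Reals.
From Coquelicot Require Import Coquelicot.
Open Scope R_scope.

Section LPLS.
Context {X : Type}.

Definition is_metric (d : X -> X -> R) : Prop :=
  (forall x y, 0 <= d x y) /\
  (forall x y, d x y = 0 <-> x = y) /\
  (forall x y, d x y = d y x) /\
  (forall x y z, d x z <= d x y + d y z).

Definition is_LPLS (d : X -> X -> R) (le ll : X -> X -> Prop)
    (l : X -> X -> Rbar) : Prop :=
  is_metric d /\
  (forall x, le x x) /\
  (forall x y z, le x y -> le y z -> le x z) /\
  (forall x y z, ll x y -> ll y z -> ll x z) /\
  (forall x y, ll x y -> le x y) /\
  (forall x y, Rbar_le 0 (l x y)) /\
  (forall x y z, le x y -> le y z ->
      Rbar_le (Rbar_plus (l x y) (l y z)) (l x z)) /\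
  (forall x y, Rbar_lt 0 (l x y) <-> ll x y).

Definition curve_cont (d : X -> X -> R) (g : R -> X) : Prop :=
  forall t, 0 <= t <= 1 -> forall eps, 0 < eps -> exists delta, 0 < delta /\
    forall s, 0 <= s <= 1 -> Rabs (s - t) < delta -> d (g s) (g t) < eps.

Definition max_geod (d : X -> X -> R) (le : X -> X -> Prop)
    (l : X -> X -> Rbar) (x y : X) (g : R -> X) : Prop :=
  curve_cont d g /\ g 0 = x /\ g 1 = y /\
  (forall s t, 0 <= s -> s <= t -> t <= 1 -> le (g s) (g t)) /\
  (forall s t u, 0 <= s -> s <= t -> t <= u -> u <= 1 ->
     l (g s) (g u) = Rbar_plus (l (g s) (g t)) (l (g t) (g u))).

End LPLS.

(** Minkowski plane R^{1,1}: points (t, x); time separation tau. *)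
Definition mtau (p q : R * R) : R :=
  let dt := fst q - fst p in
  let dx := snd q - snd p in
  if Rle_dec (Rabs dx) dt then sqrt (dt * dt - dx * dx) else 0.

Definition on_segment (ab bb pb : R * R) : Prop :=
  exists lam, 0 <= lam <= 1 /\
    pb = ((1 - lam) * fst ab + lam * fst bb, (1 - lam) * snd ab + lam * snd bb).

Section Comparison.
Context {X : Type}.

Definition corr_pt (l : X -> X -> Rbar) (a b : X) (g : R -> X)
    (ab bb : R * R) (p : X) (pb : R * R) : Prop :=
  (exists s, 0 <= s <= 1 /\ p = g s) /\
  on_segment ab bb pb /\
  mtau ab pb = real (l a p) /\ mtau pb bb = real (l p b).

Definition corr_pt_tri (l : X -> X -> Rbar) (x y z : X)
    (gxy gyz gxz : R -> X) (xb yb zb : R * R) (p : X) (pb : R * R) : Prop :=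
  corr_pt l x y gxy xb yb p pb \/
  corr_pt l y z gyz yb zb p pb \/
  corr_pt l x z gxz xb zb p pb.

Definition tl_curv_le0_global (d : X -> X -> R) (le ll : X -> X -> Prop)
    (l : X -> X -> Rbar) : Prop :=
  (forall x y, is_finite (l x y)) /\
  (forall x y eps, 0 < eps -> exists delta, 0 < delta /\
     forall x' y', d x x' < delta -> d y y' < delta ->
       Rabs (real (l x' y') - real (l x y)) < eps) /\
  (forall x y, ll x y -> exists g, max_geod d le l x y g) /\
  (forall x y z (gxy gyz gxz : R -> X),
     ll x y -> ll y z ->
     max_geod d le l x y gxy -> max_geod d le l y z gyz ->
     max_geod d le l x z gxz ->
     forall xb yb zb : R * R,
       mtau xb yb = real (l x y) -> mtau yb zb = real (l y z) ->
       mtau xb zb = real (l x z) ->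
       forall p pb q qb,
         corr_pt_tri l x y z gxy gyz gxz xb yb zb p pb ->
         corr_pt_tri l x y z gxy gyz gxz xb yb zb q qb ->
         Rbar_le (mtau pb qb) (l p q)).

End Comparison.

From Stdlib Require Import Reals Lra Psatz.
From Coquelicot Require Import Coquelicot.
Open Scope R_scope.

(* Ptolemy's inequality holds in the Minkowski plane, and the curvature bound transports
   it. For x << y << z << w, draw comparison triangles for (x, y, z) and (x, z, w) on
   opposite sides of their common side [xbar, zbar]. For every p on a geodesic from x to z,
   comparison in both triangles and the reverse triangle inequality give
   l(y,w) >= tau(ybar,pbar) + tau(pbar,wbar). If the segment [ybar, wbar] crosses
   [xbar, zbar], this yields l(y,w) >= tau(ybar,wbar), and Ptolemy in the plane is a
   Cauchy-Schwarz inequality in null coordinates; otherwise p = z already suffices, by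
   AM-GM. The causal case reduces to the timelike one by moving y and z slightly towards
   each other along a geodesic, unless l(y,z) = 0, where the inequality is immediate. *)

Lemma sqrt_mult_le_avg u v : 0 <= u -> 0 <= v -> sqrt (u * v) <= (u + v) / 2.
Proof.
  intros Hu Hv. apply Rsqr_incr_0_var; [|lra].
  rewrite Rsqr_sqrt; [|nra].
  unfold Rsqr. pose proof (pow2_ge_0 (u - v)). nra.
Qed.

Lemma sqrt_mult_add_le u v s t : 0 <= u -> 0 <= v -> 0 <= s -> 0 <= t ->
  sqrt (u * v) + sqrt (s * t) <= sqrt ((u + s) * (v + t)).
Proof.
  intros Hu Hv Hs Ht.
  rewrite !sqrt_mult by lra.
  pose proof (sqrt_cauchy (sqrt u) (sqrt s) (sqrt v) (sqrt t)) as Hcs.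
  rewrite !Rsqr_sqrt in Hcs by lra. exact Hcs.
Qed.

Lemma sqrt_mult_add_eq u v s t : 0 <= u -> 0 <= v -> 0 <= s -> 0 <= t ->
  u * t = s * v -> sqrt (u * v) + sqrt (s * t) = sqrt ((u + s) * (v + t)).
Proof.
  intros Hu Hv Hs Ht E. symmetry. apply sqrt_lem_1; [nra | |].
  - pose proof (sqrt_pos (u * v)); pose proof (sqrt_pos (s * t)); lra.
  - assert (Hcross : sqrt (u * v) * sqrt (s * t) = u * t).
    { rewrite <- sqrt_mult by nra.
      replace (u * v * (s * t)) with ((u * t) * (u * t)) by (rewrite E at 2; ring).
      apply sqrt_square. nra. }
    pose proof (sqrt_sqrt (u * v) ltac:(nra)). pose proof (sqrt_sqrt (s * t) ltac:(nra)).
    nra.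
Qed.

Lemma continuity_pt_le_left (h : R -> R) a t f : a < t -> continuity_pt h t ->
  (forall s, a <= s < t -> h s <= f) -> h t <= f.
Proof.
  intros Hat Hh Hle. apply Rnot_lt_le. intros Hf.
  destruct (Hh (h t - f)) as [alp [Halp Hnear]]; [lra|].
  set (s := Rmax a (t - alp / 2)).
  assert (Hs : a <= s < t /\ Rabs (s - t) < alp).
  { unfold s, Rmax. destruct Rle_dec; split; try lra; apply Rabs_def1; lra. }
  destruct Hs as [Hs Hst].
  specialize (Hnear s (conj (conj I (Rgt_not_eq t s ltac:(lra))) Hst)).
  simpl in Hnear. unfold R_dist in Hnear. apply Rabs_def2 in Hnear. specialize (Hle s Hs). lra.
Qed.

Definition clamp01 (s : R) : R := Rmax 0 (Rmin 1 s).

Lemma clamp01_bounds s : 0 <= clamp01 s <= 1.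
Proof. unfold clamp01, Rmax, Rmin. repeat destruct Rle_dec; lra. Qed.

Lemma clamp01_id s : 0 <= s <= 1 -> clamp01 s = s.
Proof. intros Hs. unfold clamp01, Rmax, Rmin. repeat destruct Rle_dec; lra. Qed.

Lemma clamp01_lipschitz s t : Rabs (clamp01 s - clamp01 t) <= Rabs (s - t).
Proof.
  unfold clamp01, Rmax, Rmin. repeat destruct Rle_dec.
  all: unfold Rabs; repeat destruct Rcase_abs; lra.
Qed.

Lemma Rle_of_le_plus_small r1 r2 k m : 0 <= k -> 0 < m ->
  (forall eps, 0 < eps < m -> r1 <= r2 + k * eps) -> r1 <= r2.
Proof.
  intros Hk Hm Hsmall. apply Rle_plus_epsilon. intros eps Heps.
  set (eps0 := Rmin (m / 2) (eps / (k + 1))).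
  assert (Heps0 : 0 < eps0 < m).
  { unfold eps0, Rmin. destruct Rle_dec; [lra|].
    split; [apply Rdiv_lt_0_compat|]; lra. }
  assert (Hkeps0 : k * eps0 <= eps).
  { assert (eps0 * (k + 1) <= eps).
    { apply (Rmult_le_reg_r (/ (k + 1))); [apply Rinv_0_lt_compat; lra|].
      rewrite Rmult_assoc, Rinv_r, Rmult_1_r by lra. apply Rmin_r. }
    nra. }
  specialize (Hsmall eps0 Heps0). lra.
Qed.

(* [detour_length P P' Q Q' dl] is [tau ybar pbar + tau pbar wbar] in null coordinates, for
   [ybar = (e - Q, e - Q')], [wbar = (e + P, e + P')] and [pbar = (e - dl, e - dl)]. *)
Definition detour_length (P P' Q Q' dl : R) : R :=
  sqrt ((Q - dl) * (Q' - dl)) + sqrt ((P + dl) * (P' + dl)).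

Lemma continuity_pt_detour_length P P' Q Q' t : continuity_pt (detour_length P P' Q Q') t.
Proof.
  apply continuity_pt_filterlim.
  apply (continuous_plus (fun dl => sqrt ((Q - dl) * (Q' - dl)))
                         (fun dl => sqrt ((P + dl) * (P' + dl))));
  apply continuous_sqrt_comp; apply (ex_derive_continuous (V := R_NormedModule));
  auto_derive; exact I.
Qed.

Lemma detour_length_le_closure P P' Q Q' f : 0 < Q' ->
  (forall dl, 0 <= dl < Q' -> detour_length P P' Q Q' dl <= f) ->
  forall dl, 0 <= dl <= Q' -> detour_length P P' Q Q' dl <= f.
Proof.
  intros HQ' Hf dl Hdl. destruct (Rlt_le_dec dl Q') as [Hlt | Hge].
  - apply Hf. lra.
  - replace dl with Q' by lra.
    apply (continuity_pt_le_left _ 0); [lra | apply continuity_pt_detour_length | exact Hf].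
Qed.

Section PtolemyNullCoordinates.

Variables e P P' Q Q' : R.
Hypotheses (HP' : 0 <= P') (HP : P' <= P) (HQ' : 0 <= Q') (HQ : Q' <= Q) (HQe : Q <= e).

Local Notation ptolemy_lhs :=
  (sqrt ((e - Q) * (e - Q')) * sqrt (P * P') + sqrt ((e + P) * (e + P')) * sqrt (Q * Q')).

Lemma ptolemy_lhs_le_cauchy : ptolemy_lhs <= e * sqrt ((P + Q) * (P' + Q')).
Proof.
  rewrite <- !sqrt_mult by nra.
  replace ((e - Q) * (e - Q') * (P * P')) with (((e - Q) * P) * ((e - Q') * P')) by ring.
  replace ((e + P) * (e + P') * (Q * Q')) with (((e + P) * Q) * ((e + P') * Q')) by ring.
  eapply Rle_trans; [apply sqrt_mult_add_le; nra|].
  replace (((e - Q) * P + (e + P) * Q) * ((e - Q') * P' + (e + P') * Q'))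
    with ((e * e) * ((P + Q) * (P' + Q'))) by ring.
  rewrite sqrt_mult, sqrt_square by nra. lra.
Qed.

Lemma ptolemy_lhs_le_amgm :
  ptolemy_lhs <= e * (sqrt (Q * Q') + sqrt (P * P'))
                 + (sqrt (Q * Q') * (P + P') - sqrt (P * P') * (Q + Q')) / 2.
Proof.
  pose proof (sqrt_mult_le_avg (e - Q) (e - Q') ltac:(lra) ltac:(lra)).
  pose proof (sqrt_mult_le_avg (e + P) (e + P') ltac:(lra) ltac:(lra)).
  pose proof (sqrt_pos (Q * Q')). pose proof (sqrt_pos (P * P')).
  nra.
Qed.

Lemma amgm_defect_nonpos : P * Q' <= P' * Q ->
  sqrt (Q * Q') * (P + P') <= sqrt (P * P') * (Q + Q').
Proof.
  intros Hcross. apply Rsqr_incr_0_var; [|pose proof (sqrt_pos (P * P')); nra].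
  rewrite !Rsqr_mult, !Rsqr_sqrt by nra. unfold Rsqr.
  assert (0 <= (P' * Q - P * Q') * (P * Q - P' * Q')) by (apply Rmult_le_pos; nra).
  nra.
Qed.

Lemma detour_length_crossing : P' * Q < P * Q' ->
  exists dl, 0 <= dl <= Q' /\ detour_length P P' Q Q' dl = sqrt ((P + Q) * (P' + Q')).
Proof.
  intros Hcross.
  assert (Hden : 0 < P + Q - P' - Q') by nra.
  set (dl := (P * Q' - P' * Q) / (P + Q - P' - Q')).
  assert (Hdl : dl * (P + Q - P' - Q') = P * Q' - P' * Q) by (unfold dl; field; lra).
  exists dl. split; [split; nra|].
  unfold detour_length. rewrite sqrt_mult_add_eq by nra.
  f_equal. ring.
Qed.

Lemma ptolemy_null_coordinates f :
  (forall dl, 0 <= dl <= Q' -> detour_length P P' Q Q' dl <= f) -> ptolemy_lhs <= e * f.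
Proof.
  intros Hf.
  destruct (Rle_lt_dec (P * Q') (P' * Q)) as [Hno | Hcross].
  - pose proof (amgm_defect_nonpos Hno). pose proof ptolemy_lhs_le_amgm.
    assert (Hf0 := Hf 0 ltac:(lra)). unfold detour_length in Hf0.
    rewrite !Rminus_0_r, !Rplus_0_r in Hf0.
    pose proof (Rmult_le_compat_l e _ _ ltac:(lra) Hf0). lra.
  - destruct (detour_length_crossing Hcross) as [dl [Hdl Heq]].
    pose proof ptolemy_lhs_le_cauchy. rewrite <- Heq in *.
    pose proof (Rmult_le_compat_l e _ _ ltac:(lra) (Hf dl Hdl)). lra.
Qed.

End PtolemyNullCoordinates.

(* Null coordinates: [n1 = t + x] and [n2 = t - x]. *)
Definition null_pt (n1 n2 : R) : R * R := ((n1 + n2) / 2, (n1 - n2) / 2).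

Lemma mtau_null_pt n1 n2 m1 m2 : n1 <= m1 -> n2 <= m2 ->
  mtau (null_pt n1 n2) (null_pt m1 m2) = sqrt ((m1 - n1) * (m2 - n2)).
Proof.
  intros H1 H2. unfold mtau, null_pt; simpl.
  destruct Rle_dec as [_ | Hnot].
  - f_equal. field.
  - exfalso. apply Hnot, Rabs_le. lra.
Qed.

Lemma mtau_null_pt_eq n1 n2 m1 m2 v : n1 <= m1 -> n2 <= m2 -> 0 <= v ->
  (m1 - n1) * (m2 - n2) = v * v -> mtau (null_pt n1 n2) (null_pt m1 m2) = v.
Proof. intros H1 H2 Hv E. rewrite mtau_null_pt, E by lra. apply sqrt_square, Hv. Qed.

Lemma mtau_refl p : mtau p p = 0.
Proof.
  unfold mtau. rewrite !Rminus_diag, Rabs_R0.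
  destruct Rle_dec; [apply sqrt_0 | reflexivity].
Qed.

Lemma on_segment_null_pt n1 n2 m1 m2 r1 r2 lam : 0 <= lam <= 1 ->
  r1 = n1 + lam * (m1 - n1) -> r2 = n2 + lam * (m2 - n2) ->
  on_segment (null_pt n1 n2) (null_pt m1 m2) (null_pt r1 r2).
Proof.
  intros Hlam -> ->. exists lam. split; [exact Hlam|].
  unfold null_pt; simpl. f_equal; field.
Qed.

Lemma quadratic_roots s p : 0 <= p -> 0 <= s -> 4 * p <= s * s ->
  exists r1 r2, 0 <= r1 <= r2 /\ r1 + r2 = s /\ r1 * r2 = p.
Proof.
  intros Hp Hs Hdisc.
  set (D := sqrt (s * s - 4 * p)).
  assert (HD : D * D = s * s - 4 * p) by (apply sqrt_sqrt; lra).
  assert (HD0 : 0 <= D) by apply sqrt_pos.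
  assert (HDs : D <= s) by (rewrite <- (sqrt_square s Hs); apply sqrt_le_1_alt; lra).
  exists ((s - D) / 2), ((s + D) / 2). repeat split; try lra; nra.
Qed.

Lemma null_coords_inner a b e : 0 <= a -> 0 <= b -> 0 < e -> a + b <= e ->
  exists Q Q', 0 <= Q' <= Q /\ Q <= e /\ Q * Q' = b * b /\ (e - Q) * (e - Q') = a * a.
Proof.
  intros Ha Hb He Habe.
  set (s := (e * e + b * b - a * a) / e).
  assert (Hs : s * e = e * e + b * b - a * a) by (unfold s; field; lra).
  assert (Hsb : 2 * b <= s).
  { assert ((s - 2 * b) * e = (e - b - a) * (e - b + a)) by lra.
    assert (0 <= (e - b - a) * (e - b + a)) by (apply Rmult_le_pos; lra). nra. }
  destruct (quadratic_roots s (b * b)) as (Q' & Q & HQ & Hsum & Hprod); try nra.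
  assert (HeQ : (e - Q) * (e - Q') = a * a) by nra.
  exists Q, Q'. repeat split; try lra.
  apply Rnot_lt_le. intros HQe.
  assert (e <= Q') by nra. nra.
Qed.

Lemma null_coords_outer c e g : 0 <= c -> 0 < e -> e + c <= g ->
  exists P P', 0 <= P' <= P /\ P * P' = c * c /\ (e + P) * (e + P') = g * g.
Proof.
  intros Hc He Hceg.
  set (s := (g * g - e * e - c * c) / e).
  assert (Hs : s * e = g * g - e * e - c * c) by (unfold s; field; lra).
  assert (Hsc : 2 * c <= s).
  { assert ((s - 2 * c) * e = (g - e - c) * (g + e + c)) by lra.
    assert (0 <= (g - e - c) * (g + e + c)) by (apply Rmult_le_pos; lra). nra. }
  destruct (quadratic_roots s (c * c)) as (P' & P & HP & Hsum & Hprod); try nra.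
  exists P, P'. repeat split; try lra. nra.
Qed.

Section TimelikeCurvature.

Context {X : Type} (d : X -> X -> R) (le ll : X -> X -> Prop) (l : X -> X -> Rbar).
Hypotheses (HX : is_LPLS d le ll l) (Hc : tl_curv_le0_global d le ll l).

Local Notation tau p q := (real (l p q)).

Lemma l_finite p q : l p q = Finite (tau p q).
Proof. symmetry. apply (proj1 Hc). Qed.

Lemma tau_nonneg p q : 0 <= tau p q.
Proof.
  destruct HX as (_ & _ & _ & _ & _ & Hnn & _).
  specialize (Hnn p q). rewrite l_finite in Hnn. exact Hnn.
Qed.

Lemma tau_reverse_triangle p q r : le p q -> le q r -> tau p q + tau q r <= tau p r.
Proof.
  intros Hpq Hqr. destruct HX as (_ & _ & _ & _ & _ & _ & Hrev & _).
  specialize (Hrev p q r Hpq Hqr).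
  rewrite (l_finite p q), (l_finite q r), (l_finite p r) in Hrev. exact Hrev.
Qed.

Lemma tau_refl p : tau p p = 0.
Proof.
  assert (Hpp : le p p) by (destruct HX as (_ & Hrefl & _); apply Hrefl).
  pose proof (tau_reverse_triangle p p p Hpp Hpp). pose proof (tau_nonneg p p). lra.
Qed.

Lemma ll_iff_tau_pos p q : ll p q <-> 0 < tau p q.
Proof.
  destruct HX as (_ & _ & _ & _ & _ & _ & _ & Hpos).
  rewrite <- Hpos, l_finite. reflexivity.
Qed.

Lemma le_of_tau_pos p q : 0 < tau p q -> le p q.
Proof.
  intros Hpos. destruct HX as (_ & _ & _ & _ & Hllle & _).
  apply Hllle, ll_iff_tau_pos, Hpos.
Qed.

Lemma max_geod_split u v g s : max_geod d le l u v g -> 0 <= s <= 1 ->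
  le u (g s) /\ le (g s) v /\ tau u v = tau u (g s) + tau (g s) v.
Proof.
  intros (_ & Hg0 & Hg1 & Hmono & Hadd) Hs.
  rewrite <- Hg0, <- Hg1. repeat split; try (apply Hmono; lra).
  specialize (Hadd 0 s 1 ltac:(lra) ltac:(lra) ltac:(lra) ltac:(lra)).
  rewrite (l_finite (g 0) (g 1)), (l_finite (g 0) (g s)), (l_finite (g s) (g 1)) in Hadd.
  injection Hadd. easy.
Qed.

(* The curve is extended by constants outside [0, 1] so that the intermediate value
   theorem for functions continuous on all of [R] applies. *)
Lemma max_geod_ivt u v g t : max_geod d le l u v g -> 0 <= t <= tau u v ->
  exists s, 0 <= s <= 1 /\ tau u (g s) = t.
Proof.
  intros Hg Ht.
  set (phi := fun s => tau u (g (clamp01 s)) - t).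
  assert (Hphi : continuity phi).
  { intros s0 eps Heps.
    destruct (proj1 (proj2 Hc) u (g (clamp01 s0)) eps Heps) as (del1 & Hdel1 & Hl).
    destruct (proj1 Hg (clamp01 s0) (clamp01_bounds s0) del1 Hdel1) as (del2 & Hdel2 & Hcurve).
    destruct HX as ((_ & Hd0 & Hdsym & _) & _).
    exists del2. split; [lra|]. intros s [_ Hs]. simpl in Hs |- *. unfold R_dist in Hs |- *.
    unfold phi. replace (tau u (g (clamp01 s)) - t - (tau u (g (clamp01 s0)) - t))
      with (tau u (g (clamp01 s)) - tau u (g (clamp01 s0))) by ring.
    apply Hl.
    - rewrite (proj2 (Hd0 u u) eq_refl). exact Hdel1.
    - rewrite Hdsym. apply Hcurve; [apply clamp01_bounds|].
      pose proof (clamp01_lipschitz s s0). lra. }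
  destruct (IVT_cor phi 0 1 Hphi ltac:(lra)) as (s & _ & Hs).
  - destruct Hg as (_ & Hg0 & Hg1 & _).
    unfold phi. rewrite !clamp01_id, Hg0, Hg1, tau_refl by lra.
    replace ((0 - t) * (tau u v - t)) with (- (t * (tau u v - t))) by ring.
    assert (0 <= t * (tau u v - t)) by (apply Rmult_le_pos; lra). lra.
  - exists (clamp01 s). split; [apply clamp01_bounds|]. unfold phi in Hs. lra.
Qed.

Lemma corr_pt_endpoint a b g ab bb : max_geod d le l a b g -> mtau ab bb = tau a b ->
  corr_pt l a b g ab bb b bb.
Proof.
  intros (_ & _ & Hg1 & _) Hab. split; [|split; [|split]].
  - exists 1. split; [lra | symmetry; exact Hg1].
  - exists 1. split; [lra|]. destruct bb; simpl; f_equal; ring.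
  - exact Hab.
  - rewrite mtau_refl, tau_refl. reflexivity.
Qed.

Lemma corr_pt_diagonal x z g s dl : max_geod d le l x z g -> 0 < tau x z ->
  0 <= s <= 1 -> tau (g s) z = dl -> 0 <= dl <= tau x z ->
  corr_pt l x z g (null_pt 0 0) (null_pt (tau x z) (tau x z)) (g s)
    (null_pt (tau x z - dl) (tau x z - dl)).
Proof.
  intros Hg He Hs Hpz Hdl.
  destruct (max_geod_split x z g s Hg Hs) as (_ & _ & Hsplit).
  split; [|split; [|split]].
  - exists s. split; [exact Hs | reflexivity].
  - apply (on_segment_null_pt _ _ _ _ _ _ ((tau x z - dl) / tau x z)).
    + split; [apply Rdiv_le_0_compat; lra|].
      apply Rmult_le_reg_r with (tau x z); [lra|].
      unfold Rdiv. rewrite Rmult_assoc, Rinv_l by lra. lra.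
    + field. lra.
    + field. lra.
  - apply mtau_null_pt_eq; nra.
  - apply mtau_null_pt_eq; nra.
Qed.

Lemma tau_vertex_to_base_ge x y z gxy gyz gxz Q Q' s dl :
  ll x y -> ll y z ->
  max_geod d le l x y gxy -> max_geod d le l y z gyz -> max_geod d le l x z gxz ->
  0 <= Q' <= Q -> Q <= tau x z -> Q * Q' = tau y z * tau y z ->
  (tau x z - Q) * (tau x z - Q') = tau x y * tau x y ->
  0 <= s <= 1 -> tau (gxz s) z = dl -> 0 <= dl <= Q' ->
  sqrt ((Q - dl) * (Q' - dl)) <= tau y (gxz s).
Proof.
  intros Hxy Hyz Gxy Gyz Gxz HQ HQe HQQ' HeQ Hs Hpz Hdl.
  destruct HX as (_ & _ & _ & Hlltr & _).
  destruct Hc as (_ & _ & _ & Hcmp).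
  pose proof (proj1 (ll_iff_tau_pos x z) (Hlltr x y z Hxy Hyz)) as He.
  pose proof (tau_nonneg x y). pose proof (tau_nonneg y z).
  set (e := tau x z) in *.
  assert (Hdl_e : 0 <= dl <= e) by lra.
  assert (Mxy : mtau (null_pt 0 0) (null_pt (e - Q) (e - Q')) = tau x y)
    by (apply mtau_null_pt_eq; nra).
  assert (Myz : mtau (null_pt (e - Q) (e - Q')) (null_pt e e) = tau y z)
    by (apply mtau_null_pt_eq; nra).
  assert (Mxz : mtau (null_pt 0 0) (null_pt e e) = e) by (apply mtau_null_pt_eq; nra).
  pose proof (Hcmp x y z gxy gyz gxz Hxy Hyz Gxy Gyz Gxz _ _ _ Mxy Myz Mxz
    y (null_pt (e - Q) (e - Q')) (gxz s) (null_pt (e - dl) (e - dl))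
    (or_introl (corr_pt_endpoint x y gxy _ _ Gxy Mxy))
    (or_intror (or_intror (corr_pt_diagonal x z gxz s dl Gxz He Hs Hpz Hdl_e))))
    as Hcmp_yp.
  rewrite mtau_null_pt, l_finite in Hcmp_yp by lra.
  replace ((e - dl - (e - Q)) * (e - dl - (e - Q'))) with ((Q - dl) * (Q' - dl))
    in Hcmp_yp by ring.
  exact Hcmp_yp.
Qed.

Lemma tau_base_to_vertex_ge x z w gxz gzw gxw P P' s dl :
  ll x z -> ll z w ->
  max_geod d le l x z gxz -> max_geod d le l z w gzw -> max_geod d le l x w gxw ->
  0 <= P' <= P -> P * P' = tau z w * tau z w ->
  (tau x z + P) * (tau x z + P') = tau x w * tau x w ->
  0 <= s <= 1 -> tau (gxz s) z = dl -> 0 <= dl <= tau x z ->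
  sqrt ((P + dl) * (P' + dl)) <= tau (gxz s) w.
Proof.
  intros Hxz Hzw Gxz Gzw Gxw HP HPP' HeP Hs Hpz Hdl.
  destruct Hc as (_ & _ & _ & Hcmp).
  pose proof (proj1 (ll_iff_tau_pos x z) Hxz) as He.
  pose proof (tau_nonneg z w). pose proof (tau_nonneg x w).
  set (e := tau x z) in *.
  assert (Mxz : mtau (null_pt 0 0) (null_pt e e) = e) by (apply mtau_null_pt_eq; nra).
  assert (Mzw : mtau (null_pt e e) (null_pt (e + P) (e + P')) = tau z w)
    by (apply mtau_null_pt_eq; nra).
  assert (Mxw : mtau (null_pt 0 0) (null_pt (e + P) (e + P')) = tau x w)
    by (apply mtau_null_pt_eq; nra).
  pose proof (Hcmp x z w gxz gzw gxw Hxz Hzw Gxz Gzw Gxw _ _ _ Mxz Mzw Mxw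
    (gxz s) (null_pt (e - dl) (e - dl)) w (null_pt (e + P) (e + P'))
    (or_introl (corr_pt_diagonal x z gxz s dl Gxz He Hs Hpz Hdl))
    (or_intror (or_introl (corr_pt_endpoint z w gzw _ _ Gzw Mzw))))
    as Hcmp_pw.
  rewrite mtau_null_pt, l_finite in Hcmp_pw by lra.
  replace ((e + P - (e - dl)) * (e + P' - (e - dl))) with ((P + dl) * (P' + dl))
    in Hcmp_pw by ring.
  exact Hcmp_pw.
Qed.

Lemma ptolemy_timelike x y z w : ll x y -> ll y z -> ll z w ->
  tau x y * tau z w + tau x w * tau y z <= tau x z * tau y w.
Proof.
  intros Hxy Hyz Hzw.
  destruct HX as (_ & _ & _ & Hlltr & Hllle & _).
  destruct Hc as (_ & _ & Hgeod & _).
  assert (Hxz : ll x z) by eauto. assert (Hxw : ll x w) by eauto.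
  destruct (Hgeod x y Hxy) as [gxy Gxy]. destruct (Hgeod y z Hyz) as [gyz Gyz].
  destruct (Hgeod x z Hxz) as [gxz Gxz]. destruct (Hgeod z w Hzw) as [gzw Gzw].
  destruct (Hgeod x w Hxw) as [gxw Gxw].
  pose proof (proj1 (ll_iff_tau_pos y z) Hyz) as Hb.
  pose proof (proj1 (ll_iff_tau_pos z w) Hzw) as Hc0.
  pose proof (proj1 (ll_iff_tau_pos x z) Hxz) as He.
  pose proof (tau_reverse_triangle x y z (Hllle _ _ Hxy) (Hllle _ _ Hyz)) as Habe.
  pose proof (tau_reverse_triangle x z w (Hllle _ _ Hxz) (Hllle _ _ Hzw)) as Hecg.
  pose proof (tau_nonneg x y).
  destruct (null_coords_inner (tau x y) (tau y z) (tau x z)) as (Q & Q' & HQ & HQe & HQQ' & HeQ);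
    try lra.
  destruct (null_coords_outer (tau z w) (tau x z) (tau x w)) as (P & P' & HP & HPP' & HeP);
    try lra.
  assert (HQ'0 : 0 < Q') by nra. assert (HP'0 : 0 < P') by nra.
  assert (Hdetour : forall dl, 0 <= dl < Q' -> detour_length P P' Q Q' dl <= tau y w).
  { intros dl Hdl.
    destruct (max_geod_ivt x z gxz (tau x z - dl) Gxz ltac:(lra)) as (s & Hs & Hxp).
    destruct (max_geod_split x z gxz s Gxz Hs) as (_ & _ & Hsplit).
    assert (Hpz : tau (gxz s) z = dl) by lra.
    pose proof (tau_vertex_to_base_ge x y z gxy gyz gxz Q Q' s dl Hxy Hyz Gxy Gyz Gxz
      HQ HQe HQQ' HeQ Hs Hpz ltac:(lra)) as Hyp.
    pose proof (tau_base_to_vertex_ge x z w gxz gzw gxw P P' s dl Hxz Hzw Gxz Gzw Gxw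
      HP HPP' HeP Hs Hpz ltac:(lra)) as Hpw.
    assert (0 < sqrt ((Q - dl) * (Q' - dl))) by (apply sqrt_lt_R0; nra).
    assert (0 < sqrt ((P + dl) * (P' + dl))) by (apply sqrt_lt_R0; nra).
    pose proof (tau_reverse_triangle y (gxz s) w
      (le_of_tau_pos y (gxz s) ltac:(lra)) (le_of_tau_pos (gxz s) w ltac:(lra))).
    unfold detour_length. lra. }
  pose proof (ptolemy_null_coordinates (tau x z) P P' Q Q' ltac:(lra) ltac:(lra)
    ltac:(lra) ltac:(lra) HQe (tau y w) (detour_length_le_closure _ _ _ _ _ HQ'0 Hdetour))
    as Hptol.
  rewrite HeQ, HeP, HQQ', HPP', !sqrt_square in Hptol by apply tau_nonneg.
  lra.
Qed.

Lemma timelike_shrink y z eps : 0 < eps -> 2 * eps < tau y z ->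
  exists y' z', le y y' /\ le z' z /\ tau y y' = eps /\ tau z' z = eps /\
    tau y' z' = tau y z - 2 * eps.
Proof.
  intros Heps Hyz.
  destruct Hc as (_ & _ & Hgeod & _).
  destruct (Hgeod y z (proj2 (ll_iff_tau_pos y z) ltac:(lra))) as [g1 G1].
  destruct (max_geod_ivt y z g1 eps G1 ltac:(lra)) as (s1 & Hs1 & Hyy').
  destruct (max_geod_split y z g1 s1 G1 Hs1) as (Hle1 & _ & Hsplit1).
  set (y' := g1 s1) in *.
  destruct (Hgeod y' z (proj2 (ll_iff_tau_pos y' z) ltac:(lra))) as [g2 G2].
  destruct (max_geod_ivt y' z g2 (tau y z - 2 * eps) G2 ltac:(lra)) as (s2 & Hs2 & Hy'z').
  destruct (max_geod_split y' z g2 s2 G2 Hs2) as (_ & Hle2 & Hsplit2).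
  exists y', (g2 s2). repeat split; auto; lra.
Qed.

Lemma ptolemy_up_to_shrink x y z w eps : le x y -> le y z -> le z w ->
  0 < eps -> 2 * eps < tau y z ->
  tau x y * tau z w + tau x w * tau y z <= tau x z * tau y w + 2 * tau x w * eps.
Proof.
  intros Hxy Hyz Hzw Heps Hb.
  destruct (timelike_shrink y z eps Heps Hb) as (y' & z' & Hyy' & Hz'z & Hy & Hz & Hy'z').
  destruct HX as (_ & _ & Hletr & _).
  assert (Hy'z'le : le y' z') by (apply le_of_tau_pos; lra).
  pose proof (tau_reverse_triangle x y y' Hxy Hyy') as Hxy'.
  pose proof (tau_reverse_triangle z' z w Hz'z Hzw) as Hz'w.
  pose proof (tau_reverse_triangle x z' z (Hletr _ _ _ Hxy (Hletr _ _ _ Hyy' Hy'z'le)) Hz'z)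
    as Hxz'.
  pose proof (tau_reverse_triangle y y' w Hyy' (Hletr _ _ _ Hy'z'le (Hletr _ _ _ Hz'z Hzw)))
    as Hy'w.
  pose proof (tau_nonneg x y). pose proof (tau_nonneg z w). pose proof (tau_nonneg x w).
  pose proof (ptolemy_timelike x y' z' w (proj2 (ll_iff_tau_pos x y') ltac:(lra))
    (proj2 (ll_iff_tau_pos y' z') ltac:(lra)) (proj2 (ll_iff_tau_pos z' w) ltac:(lra)))
    as Hptol.
  pose proof (tau_nonneg x z'). pose proof (tau_nonneg y' w).
  assert (tau x y * tau z w <= tau x y' * tau z' w) by (apply Rmult_le_compat; lra).
  assert (tau x z' * tau y' w <= tau x z * tau y w) by (apply Rmult_le_compat; lra).
  rewrite Hy'z' in Hptol. lra.
Qed.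

End TimelikeCurvature.

Theorem proposition4p1 (X : Type) (d : X -> X -> R) (le ll : X -> X -> Prop)
    (l : X -> X -> Rbar)
    (HX : is_LPLS d le ll l) (Hcurv : tl_curv_le0_global d le ll l) :
  forall x y z w : X, le x y -> le y z -> le z w ->
    real (l x z) * real (l y w) >=
      real (l x y) * real (l z w) + real (l x w) * real (l y z).
Proof.
  intros x y z w Hxy Hyz Hzw. apply Rle_ge.
  destruct (Rle_lt_or_eq_dec _ _ (tau_nonneg d le ll l HX Hcurv y z)) as [Hb | Hb].
  - apply (Rle_of_le_plus_small _ _ (2 * real (l x w)) (real (l y z) / 2)).
    + pose proof (tau_nonneg d le ll l HX Hcurv x w). lra.
    + lra.
    + intros eps Heps.
      apply (ptolemy_up_to_shrink d le ll l HX Hcurv); auto; lra.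
  - rewrite <- Hb, Rmult_0_r, Rplus_0_r.
    pose proof (tau_reverse_triangle d le ll l HX Hcurv x y z Hxy Hyz).
    pose proof (tau_reverse_triangle d le ll l HX Hcurv y z w Hyz Hzw).
    pose proof (tau_nonneg d le ll l HX Hcurv x y).
    pose proof (tau_nonneg d le ll l HX Hcurv z w).
    apply Rmult_le_compat; lra.
Qed.
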